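(* Let $a,d\in\mathbb N$ and let $\chi\in M(d)_\mathbb R$ be strictly dominant with $\chi\in\mathbf V^a(1,d)$. Then there exists a unique integer $0\le e\le d$ such that \[ \chi=\sum_{j<i\le e}c_{ij}(\beta_i-\beta_j)+\sum_{e<j<i}c_{ij}(\beta_i-\beta_j)+\sum_{j\le e<i}\tfrac32(\beta_i-\beta_j)+\sum_{1\le i\le d}c_i\beta_i \] for some real numbers with $0\le c_{ij}\le\frac32$ for $j<i$, $-\frac{a+2}{2}\le c_i\le-\frac a2$ for $i\le e$, and $-\frac a2<c_i\le\frac a2$ for $i>e$. Equivalently, with $f:=d-e$, \[ \chi\in\Big(-\tfrac{a+3f}{2}\sigma_e+\mathbf V(e)\Big)+\Big(\tfrac{3e}{2}\sigma_f+\mathbf W^a(1,f)\Big), \] where $M(e)\oplus M(f)$ is identified with $M(d)$ via the first $e$ and the last $f$ coordinates.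
   Context: $M(n)$ is the character lattice of the diagonal torus of $GL(n)$ with coordinate characters $\beta_1,\dots,\beta_n$; $\chi=\sum b_i\beta_i$ is strictly dominant if $b_1<\dots<b_n$. $\sigma_n=\sum_i\beta_i$. Minkowski sums below run over all $1\le i,j\le n$ and $1\le k\le n$: $\mathbf V(n):=\frac32\mathrm{sum}[0,\beta_i-\beta_j]+\mathrm{sum}[-\beta_k,0]$; $\mathbf W^a(1,n):=\frac32\mathrm{sum}[0,\beta_i-\beta_j]+\frac a2\mathrm{sum}(-\beta_k,\beta_k]$ (half-open segments); $\mathbf V^a(1,n):=\frac32\mathrm{sum}[0,\beta_i-\beta_j]+\frac a2\mathrm{sum}[-\beta_k,\beta_k]+\mathrm{sum}[-\beta_k,0]$. *)

From HB Require Import structures.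
From mathcomp Require Import all_boot all_order all_algebra.
Set Implicit Arguments. Unset Strict Implicit. Unset Printing Implicit Defensive.
Import Order.TTheory GRing.Theory Num.Theory.
Local Open Scope ring_scope.

(* M(d)_R is modelled as row vectors 'rV[R]_d; coordinates are 0-based:
   index i : 'I_d corresponds to beta_{i+1} of the paper. *)

Definition beta (R : realFieldType) (d : nat) (i : 'I_d) : 'rV[R]_d :=
  delta_mx 0 i.

Definition strictly_dominant (R : realFieldType) (d : nat) (chi : 'rV[R]_d) :=
  forall i j : 'I_d, (i < j)%N -> chi 0 i < chi 0 j.

(* membership in the Minkowski sum
   V^a(1,d) = 3/2 sum_{i,j} [0, beta_i - beta_j] + a/2 sum_k [-beta_k, beta_k]
              + sum_k [-beta_k, 0] *)
Definition in_Va1 (R : realFieldType) (a d : nat) (chi : 'rV[R]_d) :=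
  exists (t : 'I_d -> 'I_d -> R) (s u : 'I_d -> R),
    (forall i j, 0 <= t i j <= 1) /\
    (forall k, -1 <= s k <= 1) /\
    (forall k, 0 <= u k <= 1) /\
    chi = \sum_(i < d) \sum_(j < d) ((3 / 2) * t i j) *: (beta R i - beta R j)
          + \sum_(k < d) ((a%:R / 2) * s k) *: beta R k
          + \sum_(k < d) (u k) *: (- beta R k).

(* the decomposition of chi attached to the integer e (0 <= e <= d);
   paper's 1-based conditions translated to 0-based indices:
   j<i<=e  <->  j < i < e ;  e<j<i  <->  e <= j < i ;  j<=e<i <-> j < e <= i ;
   i <= e  <->  i < e ;  i > e  <->  e <= i. *)
Definition decomp (R : realFieldType) (a d : nat) (chi : 'rV[R]_d) (e : nat) :=
  exists (c : 'I_d -> 'I_d -> R) (c1 : 'I_d -> R),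
    (forall i j : 'I_d, (j < i)%N -> 0 <= c i j <= 3 / 2) /\
    (forall i : 'I_d, (i < e)%N -> - ((a%:R + 2) / 2) <= c1 i <= - (a%:R / 2)) /\
    (forall i : 'I_d, (e <= i)%N -> - (a%:R / 2) < c1 i <= a%:R / 2) /\
    chi = \sum_(i < d | (i < e)%N) \sum_(j < d | (j < i)%N)
              c i j *: (beta R i - beta R j)
          + \sum_(i < d | (e <= i)%N) \sum_(j < d | (e <= j)%N && (j < i)%N)
              c i j *: (beta R i - beta R j)
          + \sum_(i < d | (e <= i)%N) \sum_(j < d | (j < e)%N)
              (3 / 2) *: (beta R i - beta R j)
          + \sum_(i < d) c1 i *: beta R i.

From HB Require Import structures.
From mathcomp Require Import all_boot all_order all_algebra.
From mathcomp Require Import lra ring zify.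
Set Implicit Arguments. Unset Strict Implicit. Unset Printing Implicit Defensive.
Import Order.TTheory GRing.Theory Num.Theory.
Local Open Scope ring_scope.

(* Write b_k for the coordinates of chi and consider the potential
     Phi(k) = b_1 + ... + b_k + k a/2 + 3/2 k (d - k),   0 <= k <= d.
   Pairing a decomposition attached to e with the indicator of a block of
   coordinates shows that e minimises Phi, strictly against larger k; so e is
   the last minimiser of Phi, which gives uniqueness.  For existence take e to
   be that last minimiser.  The problem splits into two independent ones on
   the blocks [1, e] and (e, d]: a nondecreasing sequence must lie in the
   zonotope 3/2 sum_{j<i} [0, beta_i - beta_j] + [L, U]^n.  The core of the file
   is a Hall-type criterion for this ([hall_zono_repr]): bounds on all initial
   and final sums.  It is proved by induction on n: the top term is cut down
   to U and its excess poured like water onto the lower terms (an intermediate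
   value argument for piecewise affine functions over an ordered field), or
   symmetrically for the bottom term.  For the two blocks, one Hall bound comes
   from membership in V^a(1,d) and the other from the minimality of e. *)

Section PiecewiseAffineIVT.
Variable R : realFieldType.

Lemma count_lt_witness (B : seq R) (P Q : pred R) b :
  (forall c, P c -> Q c) -> b \in B -> Q b -> ~~ P b -> (count P B < count Q B)%N.
Proof.
move=> PQ; elim: B => //= c B IH; rewrite in_cons => /orP [/eqP <- | hb] Qb nPb.
  by rewrite (negbTE nPb) Qb /= add0n add1n ltnS; apply: sub_count.
have := IH hb Qb nPb; case: (P c) (Q c) (PQ c) => [] [] //= h; try lia.
Qed.

Lemma affine_ivt (f : R -> R) u v s :
  (u < v -> forall w, u <= w -> w <= v -> f w = f u + (w - u) / (v - u) * (f v - f u)) ->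
  u <= v -> f u <= s -> s <= f v -> exists w, f w = s.
Proof.
move=> Haff huv hs1 hs2.
case: (ltrP u v) => [ltuv|leuv]; last first.
  have evu : v = u by apply/eqP; rewrite eq_le huv leuv.
  by exists u; apply/eqP; rewrite eq_le hs1; rewrite evu in hs2.
case: (ltrP (f u) (f v)) => [ltf|lef]; last first.
  by exists u; apply/eqP; rewrite eq_le hs1 (le_trans hs2 lef).
set k := (s - f u) / (f v - f u).
have dpos : 0 < f v - f u by rewrite subr_gt0.
have vpos : 0 < v - u by rewrite subr_gt0.
have k0 : 0 <= k by rewrite /k divr_ge0 // ?subr_ge0 // ltW.
have k1 : k <= 1 by rewrite /k ler_pdivrMr // mul1r lerD2r.
have ek : k * (f v - f u) = s - f u by rewrite /k divfK // gt_eqF.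
have w1 : u <= u + k * (v - u) by rewrite lerDl mulr_ge0 // ltW.
have w2 : u + k * (v - u) <= v by rewrite -lerBrDl ler_piMl // ltW.
exists (u + k * (v - u)); rewrite (Haff ltuv _ w1 w2).
have -> : (u + k * (v - u) - u) / (v - u) = k by rewrite addrC addKr mulfK // gt_eqF.
lra.
Qed.

Lemma piecewise_affine_ivt (f : R -> R) (B : seq R) :
  (forall u v, u < v -> (forall b : R, b \in B -> ~~ ((u < b) && (b < v))) ->
     forall w, u <= w -> w <= v -> f w = f u + (w - u) / (v - u) * (f v - f u)) ->
  forall u v s, u <= v -> f u <= s -> s <= f v -> exists w, f w = s.
Proof.
move=> Haff.
suff H : forall k (u v s : R), leq (count (fun b : R => (u < b) && (b < v)) B) k ->
   u <= v -> f u <= s -> s <= f v -> exists w, f w = s.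
  by move=> u v s; apply: (H _ u v s (leqnn _)).
elim=> [|k IH] u v s hc huv hs1 hs2.
  apply: (affine_ivt (u:=u) (v:=v)) => // ltuv; apply: Haff => // b hb.
  apply/negP => hin.
  have : (0 < count (fun b : R => ((u < b) && (b < v))%R) B)%N.
    by rewrite -has_count; apply/hasP; exists b.
  lia.
case hh : (has (fun b => (u < b) && (b < v)) B); last first.
  apply: (affine_ivt (u:=u) (v:=v)) => // ltuv; apply: Haff => // b hb.
  by apply/negP => hin; move/hasP: hh; apply; exists b.
move/hasP: hh => [b hb /andP [hub hbv]].
case: (lerP s (f b)) => hsb.
  apply: (IH u b s) => //; last exact: ltW.
  rewrite -ltnS; apply: leq_trans hc; apply: (count_lt_witness (b:=b)) => //.
  - by move=> c /andP [-> /= h]; apply: lt_trans h hbv.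
  - by rewrite hub hbv.
  - by rewrite ltxx andbF.
apply: (IH b v s) => //; try exact: ltW.
rewrite -ltnS; apply: leq_trans hc; apply: (count_lt_witness (b:=b)) => //.
- by move=> c /andP [h ->]; rewrite (lt_trans hub h).
- by rewrite hub hbv.
- by rewrite ltxx.
Qed.

End PiecewiseAffineIVT.

Section WaterFilling.
Variable R : realFieldType.

(* The height of water in a vessel of depth 3/2 whose bottom is at 0 when
   the water level is [v]: [v] clamped to [0, 3/2]. *)
Definition clamp (v : R) : R := if v <= 0 then 0 else if 3/2 <= v then 3/2 else v.

Lemma clamp_id v : 0 <= v -> v <= 3/2 -> clamp v = v.
Proof.
rewrite /clamp => h1 h2; case: ifP => h3; first by apply/eqP; rewrite eq_le h3 h1.
by case: ifP => h4 //; apply/eqP; rewrite eq_le h4 h2.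
Qed.

Lemma clamp_le0 v : v <= 0 -> clamp v = 0.
Proof. by rewrite /clamp => ->. Qed.

Lemma clamp_ge v : 3/2 <= v -> clamp v = 3/2.
Proof. by rewrite /clamp => h; rewrite h; case: ifP => h2 //; lra. Qed.

Lemma clamp_range v : 0 <= clamp v <= 3/2.
Proof. by rewrite /clamp; case: ifP => h; last case: ifP => h2; lra. Qed.

Lemma clamp_affine a u v w : u < v -> ~~ ((u < a) && (a < v)) ->
  ~~ ((u < a + 3/2) && (a + 3/2 < v)) -> u <= w -> w <= v ->
  clamp (w - a) = clamp (u - a) + (w - u) / (v - u) * (clamp (v - a) - clamp (u - a)).
Proof.
move=> huv h1 h2 hw1 hw2.
case: (lerP v a) => hva.
  by rewrite !clamp_le0 ?subrr ?mulr0 ?addr0 //; lra.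
case: (lerP (a + 3/2) u) => hau.
  by rewrite !clamp_ge ?subrr ?mulr0 ?addr0 //; lra.
have hua : a <= u by move: h1; rewrite hva andbT -leNgt.
have hva2 : v <= a + 3/2 by move: h2; rewrite hau /= -leNgt.
rewrite !clamp_id; try lra.
have -> : v - a - (u - a) = v - u by ring.
by rewrite mulfVK ?gt_eqF ?subr_gt0 //; ring.
Qed.

Definition fill (m : nat) (x : nat -> R) (lam : R) := \sum_(0 <= j < m) clamp (lam - x j).

Lemma fill_piecewise_affine m x u v : u < v ->
  (forall b : R, b \in [seq x j | j <- iota 0 m] ++ [seq x j + 3/2 | j <- iota 0 m] ->
     ~~ ((u < b) && (b < v))) ->
  forall w, u <= w -> w <= v -> fill m x w = fill m x u + (w - u) / (v - u) * (fill m x v - fill m x u).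
Proof.
move=> huv hB w hw1 hw2; rewrite /fill -sumrB mulr_sumr -big_split /=.
rewrite big_nat_cond [in RHS]big_nat_cond; apply: eq_bigr => j /andP [/andP [_ hj] _].
apply: clamp_affine => //; apply: hB; rewrite mem_cat; apply/orP.
  by left; apply/mapP; exists j => //; rewrite mem_iota.
by right; apply/mapP; exists j => //; rewrite mem_iota.
Qed.

Definition nondecr (n : nat) (x : nat -> R) :=
  forall i j, (i <= j)%N -> (j < n)%N -> x i <= x j.

Lemma fill_onto m x s : nondecr m x -> 0 <= s -> s <= 3/2 * m%:R ->
  exists lam, fill m x lam = s.
Proof.
move=> hm hs1 hs2; case: m hm hs2 => [|m] hm hs2.
  by exists 0; rewrite /fill big_geq //; lra.
apply: (piecewise_affine_ivt (@fill_piecewise_affine m.+1 x) (u := x 0%N) (v := x m + 3/2)).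
- by have := hm 0%N m (leq0n _) (ltnSn _); lra.
- rewrite /fill big1_seq //= => j; rewrite mem_iota => /andP [_ hj].
  by apply: clamp_le0; have := hm 0%N j (leq0n _) hj; lra.
- rewrite /fill (eq_big_nat _ _ (F2 := fun _ => 3/2)).
    by rewrite sumr_const_nat subn0; move: hs2; rewrite mulr_natr.
  move=> j /andP [_ hj]; apply: clamp_ge.
  by have := hm j m (ltnSE hj) (ltnSn _); lra.
Qed.

End WaterFilling.

Section SumFacts.
Variable R : realFieldType.

Lemma sum_nat_tail (x : nat -> R) p n : (p <= n)%N ->
  \sum_(p <= i < n) x i = \sum_(0 <= i < n) x i - \sum_(0 <= i < p) x i.
Proof. by move=> h; rewrite (big_cat_nat (leq0n p) h) /= addrC addrK. Qed.

Lemma sum_const_nat_R (a : R) p q : (p <= q)%N -> \sum_(p <= i < q) a = (q%:R - p%:R) * a.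
Proof. by move=> h; rewrite sumr_const_nat -[a *+ _]mulr_natr natrB // mulrC. Qed.

Lemma sum_ge_term (F : nat -> R) n i0 : (forall i, 0 <= F i) -> (i0 < n)%N ->
  F i0 <= \sum_(0 <= i < n) F i.
Proof.
move=> h hi; rewrite (big_cat_nat (leq0n i0) (ltnW hi)) /= (big_ltn (m:=i0)) //=.
have h1 : 0 <= \sum_(0 <= i < i0) F i by apply: sumr_ge0 => i _; apply: h.
have h2 : 0 <= \sum_(i0.+1 <= i < n) F i by apply: sumr_ge0 => i _; apply: h.
lra.
Qed.

Lemma sum_le_prefix (F : nat -> R) p n : (forall i, 0 <= F i) -> (p <= n)%N ->
  \sum_(0 <= i < p) F i <= \sum_(0 <= i < n) F i.
Proof.
move=> h hp; rewrite (big_cat_nat (leq0n p) hp) /= lerDl.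
by apply: sumr_ge0 => i _; apply: h.
Qed.

End SumFacts.

Lemma down_closed_prefix (P : nat -> bool) m :
  (forall i j, (i <= j)%N -> (j < m)%N -> P j -> P i) ->
  exists q, (q <= m)%N /\ forall j, (j < m)%N -> P j = (j < q)%N.
Proof.
elim: m => [|m IH] hP; first by exists 0%N.
have [q [hq hq2]] : exists q, (q <= m)%N /\ forall j, (j < m)%N -> P j = (j < q)%N.
  by apply: IH => i j hij hj; apply: hP => //; apply: ltn_trans hj _.
case hPm: (P m).
  have qm : q = m.
    apply/eqP; rewrite eqn_leq hq /= leqNgt; apply/negP => hlt.
    by have := hP q m (ltnW hlt) (ltnSn _) hPm; rewrite hq2 ?ltnn //; lia.
  subst q; exists m.+1; split => // j hj.
  have [->|hjm] := eqVneq j m; first by rewrite hPm ltnSn.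
  have hj2 : (j < m)%N by lia.
  by rewrite hq2 // hj2; apply/esym; lia.
exists q; split; first lia.
move=> j hj; have [->|hjm] := eqVneq j m; first by rewrite hPm; apply/esym/negbTE; lia.
have hj2 : (j < m)%N by lia.
by rewrite hq2.
Qed.

Section HallCondition.
Variable R : realFieldType.
Implicit Types x y : nat -> R.

(* The defect 3/2 p (n - p): the largest total weight the segments
   3/2 [0, beta_i - beta_j] can carry out of a block of p coordinates. *)
Definition slack (n p : nat) : R := 3/2 * p%:R * (n%:R - p%:R).

Definition lower_hall n x (L : R) :=
  forall p, (p <= n)%N -> p%:R * L - slack n p <= \sum_(0 <= i < p) x i.
Definition upper_hall n x (U : R) :=
  forall p, (p <= n)%N -> \sum_(p <= i < n) x i <= (n%:R - p%:R) * U + slack n p.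

(* [x] is a point of the zonotope 3/2 sum_{j<i} [0, beta_i - beta_j] + [L, U]^n:
   x_k = c1_k + sum_{j<k} c_kj - sum_{i>k} c_ik with c in [0, 3/2], c1 in [L, U]. *)
Definition zono_repr n x (L U : R) := exists (c : nat -> nat -> R) (c1 : nat -> R),
  (forall i j, (j < i)%N -> (i < n)%N -> 0 <= c i j <= 3/2) /\
  (forall i, (i < n)%N -> L <= c1 i <= U) /\
  forall k, (k < n)%N -> x k = c1 k + \sum_(0 <= j < k) c k j - \sum_(k.+1 <= i < n) c i k.

Lemma slack_S m p : slack m.+1 p = slack m p + 3/2 * p%:R.
Proof. by rewrite /slack -natr1; ring. Qed.

Lemma slack_sym n p : (p <= n)%N -> slack n (n - p) = slack n p.
Proof. by move=> h; rewrite /slack natrB //; ring. Qed.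

Lemma zono_repr_box n x L U : (forall i, (i < n)%N -> L <= x i <= U) -> zono_repr n x L U.
Proof.
move=> hx; exists (fun _ _ => 0), x; split; first by move=> i j _ _; lra.
by split => // k hk; rewrite !big1 // subr0 addr0.
Qed.

Definition posp (v : R) : R := if 0 <= v then v else 0.

Lemma posp_ge0 v : 0 <= posp v.
Proof. by rewrite /posp; case: ifP => //; lra. Qed.

Lemma posp_ge v : v <= posp v.
Proof. by rewrite /posp; case: ifP => // /negbT; rewrite -ltNge => h; lra. Qed.

Lemma posp_split (L U v : R) : L <= U -> L - posp (L - v) + posp (v - U) <= v.
Proof. by move=> h; rewrite /posp; case: ifP => h1; case: ifP => h2; lra. Qed.

Lemma quadratic_chord (al be lam Yq Q P Rr : R) :
  Q <= P -> P <= Rr ->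
  al + be * Q + 3/2 * Q ^+ 2 <= Yq ->
  al + be * Rr + 3/2 * Rr ^+ 2 <= Yq + (Rr - Q) * lam ->
  al + be * P + 3/2 * P ^+ 2 <= Yq + (P - Q) * lam.
Proof.
move=> h1 h2 hq hr; case: (ltrP Q Rr) => hQR; last first.
  have eQ : P = Q by lra.
  by rewrite eQ subrr mul0r addr0.
set D := Yq + (P - Q) * lam - (al + be * P + 3/2 * P ^+ 2).
have key : (Rr - Q) * D = (Rr - P) * (Yq - (al + be * Q + 3/2 * Q ^+ 2)) +
   (P - Q) * (Yq + (Rr - Q) * lam - (al + be * Rr + 3/2 * Rr ^+ 2)) +
   3/2 * ((Rr - P) * (P - Q) * (Rr - Q)) by rewrite /D; ring.
have : 0 <= (Rr - Q) * D.
  rewrite key; apply: addr_ge0; first apply: addr_ge0; apply: mulr_ge0; try lra;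
  apply: mulr_ge0; try lra; apply: mulr_ge0; lra.
by rewrite pmulr_rge0 /D; lra.
Qed.

Lemma quadratic_bound_gap (Q Y : nat -> R) (al be lam : R) q r m :
  (forall p, Q p = al + be * p%:R + 3/2 * p%:R ^+ 2) -> (q <= r)%N -> (r <= m)%N ->
  (forall p, (q <= p)%N -> (p <= r)%N -> Y p = Y q + (p%:R - q%:R) * lam) ->
  (forall p, (p <= q)%N -> Q p <= Y p) ->
  (forall p, (r <= p)%N -> (p <= m)%N -> Q p <= Y p) ->
  forall p, (p <= m)%N -> Q p <= Y p.
Proof.
move=> hQ hqr hrm hY hlo hhi p hp.
case: (leqP p q) => hpq; first exact: hlo.
case: (leqP r p) => hrp; first exact: hhi.
have hq := hlo q (leqnn q); have hr := hhi r (leqnn r) hrm.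
rewrite hQ in hq; rewrite hQ (hY r hqr (leqnn r)) in hr.
rewrite hQ (hY p (ltnW hpq) (ltnW hrp)).
by apply: (quadratic_chord _ _ hq hr); rewrite ler_nat ltnW.
Qed.

Lemma clamp_mono (a b l : R) : a <= b -> a + clamp (l - a) <= b + clamp (l - b).
Proof.
move=> hab; rewrite /clamp.
by case: ifP => h1; case: ifP => h2 //; try lra; case: ifP => h3 //; try lra;
  case: ifP => h4 //; lra.
Qed.

Definition pour x (lam : R) (j : nat) : R := x j + clamp (lam - x j).

Lemma pour_nondecr m x lam : nondecr m x -> nondecr m (pour x lam).
Proof. by move=> hm i j hij hj; apply: clamp_mono; apply: hm. Qed.

(* Reduction of the top coordinate [x m] of a sequence of length [m + 1] when
   it exceeds [U]: its excess [x m - U] is poured onto the others up to the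
   level [lam], and the Hall conditions survive for the [m] remaining terms. *)
Section PourExcess.
Variables (m : nat) (x : nat -> R) (L U lam : R).
Hypothesis x_nondecr : nondecr m.+1 x.
Hypothesis x_lower : lower_hall m.+1 x L.
Hypothesis x_upper : upper_hall m.+1 x U.
Hypothesis below_le_above :
  \sum_(0 <= i < m.+1) posp (L - x i) <= \sum_(0 <= i < m.+1) posp (x i - U).
Hypothesis L_le_U : L <= U.
Hypothesis top_above : U <= x m.
Hypothesis level_lam : fill m x lam = x m - U.

Let x_max i : (i < m.+1)%N -> x i <= x m.
Proof. by move=> hi; apply: x_nondecr; lia. Qed.

(* Below the level, full vessels; above, empty ones; in between the poured
   values equal [lam], so the partial sums of [pour x lam] are affine there. *)
Lemma pour_levels : exists q r, [/\ (q <= r)%N, (r <= m)%N,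
  forall p, (p <= q)%N -> \sum_(0 <= i < p) clamp (lam - x i) = 3/2 * p%:R,
  forall p, (r <= p)%N -> (p <= m)%N -> \sum_(0 <= i < p) clamp (lam - x i) = x m - U &
  forall p, (q <= p)%N -> (p <= r)%N ->
    \sum_(0 <= i < p) pour x lam i = \sum_(0 <= i < q) pour x lam i + (p%:R - q%:R) * lam].
Proof.
have hmx : nondecr m x by move=> i j hij hj; apply: x_nondecr => //; apply: ltn_trans hj _.
have [q [hqm hq]] : exists q, (q <= m)%N /\ forall j, (j < m)%N -> (x j + 3/2 <= lam) = (j < q)%N.
  apply: (@down_closed_prefix (fun j => x j + 3/2 <= lam)) => i j hij hj h.
  by have := hmx i j hij hj; lra.
have [r [hrm hr]] : exists r, (r <= m)%N /\ forall j, (j < m)%N -> (x j < lam) = (j < r)%N.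
  apply: (@down_closed_prefix (fun j => x j < lam)) => i j hij hj h.
  by have := hmx i j hij hj; lra.
have hqr : (q <= r)%N.
  rewrite leqNgt; apply/negP => hrq; have hr1 : (r < m)%N by apply: leq_trans hrq hqm.
  by have := hq r hr1; have := hr r hr1; rewrite hrq ltnn; lra.
have full j : (j < q)%N -> clamp (lam - x j) = 3/2.
  move=> hj; apply: clamp_ge; have hj2 : (j < m)%N by lia.
  by have := hq j hj2; rewrite hj; lra.
have at_level j : (q <= j)%N -> (j < r)%N -> pour x lam j = lam.
  move=> hj1 hj2; have hj3 : (j < m)%N by lia.
  have := hq j hj3; have := hr j hj3; rewrite hj2 ltnNge hj1 /= => h1 h2.
  by rewrite /pour clamp_id; lra.
have empty j : (r <= j)%N -> (j < m)%N -> clamp (lam - x j) = 0.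
  move=> hj1 hj2; apply: clamp_le0.
  by have := hr j hj2; rewrite ltnNge hj1 /= => h; lra.
exists q, r; split => // [p hp | p hp1 hp2 | p hp1 hp2].
- rewrite (eq_big_nat _ _ (F2 := fun _ => 3/2)); last by move=> i /andP [_ hi]; apply: full; lia.
  by rewrite sum_const_nat_R // subr0 mulrC.
- have z : \sum_(p <= i < m) clamp (lam - x i) = 0.
    by rewrite big_nat_cond big1 // => i /andP [/andP [h1 h2] _]; apply: empty; lia.
  by rewrite -level_lam /fill (big_cat_nat (leq0n p) hp2) /= z addr0.
- rewrite (big_cat_nat (leq0n q) hp1) /=; congr (_ + _).
  rewrite (eq_big_nat _ _ (F2 := fun _ => lam)); first by rewrite sum_const_nat_R.
  by move=> i /andP [h1 h2]; apply: at_level => //; lia.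
Qed.

Let pour_sum p : \sum_(0 <= i < p) pour x lam i =
  \sum_(0 <= i < p) x i + \sum_(0 <= i < p) clamp (lam - x i).
Proof. by rewrite big_split. Qed.

(* The lower Hall condition survives: below the level the poured water pays
   for the lost slack, above it the excess exceeds every deficit. *)
Lemma pour_lower_hall : lower_hall m (pour x lam) L.
Proof.
have [q [r [hqr hrm full_sum top_sum affine_sum]]] := pour_levels.
move=> p0 hp0.
apply: (quadratic_bound_gap (Q := fun p => p%:R * L - slack m p)
  (Y := fun p => \sum_(0 <= i < p) pour x lam i) (al := 0) (be := L - 3/2 * m%:R)
  _ hqr hrm affine_sum _ _ hp0) => /= [p | p hp | p hp1 hp2].
- by rewrite /slack expr2; ring.
- have hp3 : (p <= m.+1)%N by lia.
  by rewrite pour_sum full_sum //; have := x_lower hp3; rewrite slack_S; lra.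
rewrite pour_sum top_sum //; have hp3 : (p <= m.+1)%N by lia.
case: (lerP (3/2 * p%:R) (x m - U)) => hs.
  by have := x_lower hp3; rewrite slack_S; lra.
have h1 : \sum_(0 <= i < p) (L - posp (L - x i) + posp (x i - U)) <= \sum_(0 <= i < p) x i.
  by apply: ler_sum => i _; apply: posp_split.
rewrite big_split /= sumrB sum_const_nat_R // subr0 in h1.
have h2 : \sum_(0 <= i < p) posp (L - x i) <= \sum_(0 <= i < m.+1) posp (L - x i).
  exact: (sum_le_prefix (fun i => posp_ge0 _) hp3).
have h3 : \sum_(0 <= i < m.+1) posp (x i - U) =
    \sum_(0 <= i < p) posp (x i - U) + \sum_(p <= i < m) posp (x i - U) + (x m - U).
  have top_pos : posp (x m - U) = x m - U by rewrite /posp subr_ge0 top_above.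
  by rewrite big_nat_recr //= (big_cat_nat (leq0n p) hp2) /= top_pos.
have h4 : \sum_(p <= i < m) posp (x i - U) <= (m%:R - p%:R) * (x m - U).
  rewrite -sum_const_nat_R //; apply: ler_sum_nat => i /andP [_ hi].
  have := x_max (ltn_trans hi (ltnSn _)); have := top_above.
  by rewrite /posp; case: ifP => _; lra.
have h5 : (m%:R - p%:R) * (x m - U) <= (m%:R - p%:R) * (3/2 * p%:R).
  by apply: ler_wpM2l; [rewrite subr_ge0 ler_nat | apply: ltW].
by have := below_le_above; rewrite /slack; lra.
Qed.

(* The upper Hall condition survives: the excess was subtracted from the top,
   and the terms above the level were already at most [x m]. *)
Lemma pour_upper_hall : upper_hall m (pour x lam) U.
Proof.
have [q [r [hqr hrm full_sum top_sum affine_sum]]] := pour_levels.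
have sum_x_S : \sum_(0 <= i < m.+1) x i = \sum_(0 <= i < m) x i + x m by rewrite big_nat_recr.
have sum_pour_m : \sum_(0 <= i < m) pour x lam i = \sum_(0 <= i < m) x i + (x m - U).
  by rewrite pour_sum -level_lam.
move=> p0 hp0; rewrite sum_nat_tail //.
suff : \sum_(0 <= i < m) pour x lam i - (m%:R - p0%:R) * U - slack m p0 <=
       \sum_(0 <= i < p0) pour x lam i by lra.
apply: (quadratic_bound_gap
  (Q := fun p => \sum_(0 <= i < m) pour x lam i - (m%:R - p%:R) * U - slack m p)
  (Y := fun p => \sum_(0 <= i < p) pour x lam i)
  (al := \sum_(0 <= i < m) pour x lam i - m%:R * U) (be := U - 3/2 * m%:R)
  _ hqr hrm affine_sum _ _ hp0) => /= [p | p hp | p hp1 hp2].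
- by rewrite /slack expr2; ring.
- have hp3 : (p <= m.+1)%N by lia.
  rewrite sum_pour_m pour_sum full_sum //.
  by have := x_upper hp3; rewrite sum_nat_tail // sum_x_S slack_S -natr1; lra.
rewrite sum_pour_m pour_sum top_sum //; have hp3 : (p <= m.+1)%N by lia.
case: (lerP (U + 3/2 * p%:R) (x m)) => hs.
  by have := x_upper hp3; rewrite sum_nat_tail // sum_x_S slack_S -natr1; lra.
have h1 : \sum_(p <= i < m) x i <= (m%:R - p%:R) * x m.
  rewrite -sum_const_nat_R //; apply: ler_sum_nat => i /andP [_ hi].
  exact: x_max (ltn_trans hi (ltnSn _)).
have h2 : (m%:R - p%:R) * x m <= (m%:R - p%:R) * (U + 3/2 * p%:R).
  by apply: ler_wpM2l; [rewrite subr_ge0 ler_nat | apply: ltW].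
by move: h1; rewrite sum_nat_tail // /slack; lra.
Qed.

End PourExcess.

(* Inductive step when the mass below [L] does not exceed the mass above [U]:
   either every term lies in [L, U], or the top term is cut down to [U] and its
   excess poured onto the others, which are then represented by induction. *)
Lemma zono_repr_top m x L U :
  (forall y, nondecr m y -> lower_hall m y L -> upper_hall m y U -> zono_repr m y L U) ->
  nondecr m.+1 x -> lower_hall m.+1 x L -> upper_hall m.+1 x U ->
  \sum_(0 <= i < m.+1) posp (L - x i) <= \sum_(0 <= i < m.+1) posp (x i - U) ->
  zono_repr m.+1 x L U.
Proof.
move=> IH hm hB hT hNP.
have hLU : L <= U.
  have h1 := hB m.+1 (leqnn _); have h2 := hT 0%N (leq0n _).
  rewrite /slack subrr mulr0 subr0 in h1; rewrite /slack mulr0 mul0r addr0 subr0 in h2.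
  have : m.+1%:R * L <= m.+1%:R * U by lra.
  by rewrite ler_pM2l // ltr0n.
have xmax i : (i < m.+1)%N -> x i <= x m by move=> hi; apply: hm; lia.
case: (ltrP (x m) U) => ht.
  have above0 : \sum_(0 <= i < m.+1) posp (x i - U) = 0.
    rewrite big_nat_cond big1 // => i /andP [/andP [_ hi] _].
    by rewrite /posp; case: ifP => // h; have := xmax i hi; lra.
  apply: zono_repr_box => i hi; apply/andP; split; last by have := xmax i hi; lra.
  have := sum_ge_term (fun i => posp_ge0 (L - x i)) hi.
  by have := posp_ge (L - x i); lra.
have s1 : x m - U <= 3/2 * m%:R.
  by have := hT m (leqnSn _); rewrite big_nat1 /slack -natr1; lra.
have hmx : nondecr m x by move=> i j hij hj; apply: hm => //; apply: ltn_trans hj _.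
have [lam hlam] := fill_onto hmx (ltac:(lra) : 0 <= x m - U) s1.
have y_nondecr : nondecr m (pour x lam) by apply: pour_nondecr.
have y_lower : lower_hall m (pour x lam) L by apply: (@pour_lower_hall m x L U lam).
have y_upper : upper_hall m (pour x lam) U by apply: (@pour_upper_hall m x L U lam).
have [c [c1 [hc [hc1 heq]]]] := IH _ y_nondecr y_lower y_upper.
exists (fun i j => if i == m then clamp (lam - x j) else c i j).
exists (fun i => if i == m then U else c1 i).
split.
  move=> i j hji hi; case: eqP => him; first exact: clamp_range.
  by apply: hc => //; lia.
split.
  by move=> i hi; case: eqP => him; [lra | apply: hc1; lia].
move=> k hk; case: (eqVneq k m) => [-> | hkm].
  rewrite (big_geq (m := m.+1) (n := m.+1)) // subr0.
  by move: hlam; rewrite /fill => ->; ring.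
have hk2 : (k < m)%N by lia.
rewrite big_nat_recr /=; last by lia.
rewrite eqxx (eq_big_nat _ _ (F1 := fun i => if i == m then clamp (lam - x k) else c i k)
  (F2 := fun i => c i k)); last first.
  by move=> i /andP [_ hi]; rewrite ifN // neq_ltn hi.
by have := heq k hk2; rewrite /pour => h; lra.
Qed.

Lemma sum_rev (F : nat -> R) m p : (p <= m.+1)%N ->
  \sum_(0 <= i < p) F (m - i)%N = \sum_(m.+1 - p <= j < m.+1) F j.
Proof.
elim: p => [|p IH] hp; first by rewrite subn0 !big_geq.
rewrite big_nat_recr //= IH; last by lia.
have -> : (m.+1 - p.+1 = m - p)%N by lia.
rewrite (big_ltn (m := (m - p)%N)); last by lia.
have -> : ((m - p).+1 = m.+1 - p)%N by lia.
by rewrite addrC.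
Qed.

Lemma zono_repr_mirror m x L U :
  zono_repr m.+1 (fun i => - x (m - i)%N) (- U) (- L) -> zono_repr m.+1 x L U.
Proof.
move=> [c [c1 [hc [hc1 heq]]]].
exists (fun i j => c (m - j)%N (m - i)%N), (fun i => - c1 (m - i)%N).
split; first by move=> i j hji hi; apply: hc; lia.
split; first by move=> i hi; have := hc1 (m - i)%N ltac:(lia); lra.
move=> k hk; have := heq (m - k)%N ltac:(lia).
have -> : (m - (m - k) = k)%N by lia.
have S1 : \sum_(0 <= j < m - k) c (m - k)%N j = \sum_(k.+1 <= i < m.+1) c (m - k)%N (m - i)%N.
  have -> : (k.+1 = m.+1 - (m - k))%N by lia.
  rewrite -(@sum_rev (fun i => c (m - k)%N (m - i)%N) m (m - k)); last by lia.
  by apply: eq_big_nat => i /andP [_ hi] /=; congr (c _ _); lia.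
have S2 : \sum_((m - k).+1 <= i < m.+1) c i (m - k)%N = \sum_(0 <= j < k) c (m - j)%N (m - k)%N.
  have -> : ((m - k).+1 = m.+1 - k)%N by lia.
  by rewrite (@sum_rev (fun j => c j (m - k)%N) m k); last by lia.
by rewrite S1 S2 => h; lra.
Qed.

Lemma hall_mirror m x L U :
  nondecr m.+1 x -> lower_hall m.+1 x L -> upper_hall m.+1 x U ->
  [/\ nondecr m.+1 (fun i => - x (m - i)%N), lower_hall m.+1 (fun i => - x (m - i)%N) (- U)
    & upper_hall m.+1 (fun i => - x (m - i)%N) (- L)].
Proof.
move=> hm hB hT; split.
- by move=> i j hij hj /=; rewrite lerN2; apply: hm; lia.
- move=> p hp; rewrite sumrN (@sum_rev x m p hp).
  have := hT (m.+1 - p)%N (leq_subr _ _).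
  by rewrite slack_sym // natrB //; lra.
- move=> p hp.
  rewrite sum_nat_tail // !sumrN (@sum_rev x m p hp) (@sum_rev x m m.+1 (leqnn _)) subnn.
  rewrite (@sum_nat_tail _ x (m.+1 - p)%N m.+1 (leq_subr _ _)).
  have := hB (m.+1 - p)%N (leq_subr _ _).
  by rewrite slack_sym // natrB //; lra.
Qed.

Theorem hall_zono_repr n x L U :
  nondecr n x -> lower_hall n x L -> upper_hall n x U -> zono_repr n x L U.
Proof.
elim: n x L U => [|m IH] x L U hm hB hT.
  by exists (fun _ _ => 0), (fun _ => 0); split.
case: (lerP (\sum_(0 <= i < m.+1) posp (L - x i)) (\sum_(0 <= i < m.+1) posp (x i - U))) => hNP.
  exact: (zono_repr_top (fun y => IH y L U) hm hB hT hNP).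
apply: zono_repr_mirror; have [hm' hB' hT'] := hall_mirror hm hB hT.
apply: (zono_repr_top (fun y => IH y (- U) (- L)) hm' hB' hT').
have -> : \sum_(0 <= i < m.+1) posp (- x (m - i)%N - - L) =
    \sum_(0 <= i < m.+1) posp (L - x (m - i)%N).
  by apply: eq_bigr => i _; congr posp; ring.
have -> : \sum_(0 <= i < m.+1) posp (- U - - x (m - i)%N) =
    \sum_(0 <= i < m.+1) posp (x (m - i)%N - U).
  by apply: eq_bigr => i _; congr posp; ring.
rewrite (@sum_rev (fun i => posp (L - x i)) m m.+1 (leqnn _)).
by rewrite (@sum_rev (fun i => posp (x i - U)) m m.+1 (leqnn _)) subnn ltW.
Qed.

Lemma linear_lower_bound n (a : nat -> R) : (forall p, (0 < p)%N -> (p <= n)%N -> 0 < a p) ->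
  exists e : R, 0 < e /\ forall p, (0 < p)%N -> (p <= n)%N -> e * p%:R <= a p.
Proof.
elim: n => [|n IH] ha; first by exists 1; split => // p h1 h2; lia.
have [e [e0 he]] : exists e : R, 0 < e /\ forall p, (0 < p)%N -> (p <= n)%N -> e * p%:R <= a p.
  by apply: IH => p h1 h2; apply: ha => //; lia.
have an : 0 < a n.+1 by apply: ha.
have n0 : 0 < n.+1%:R :> R by rewrite ltr0n.
case: (lerP (e * n.+1%:R) (a n.+1)) => h.
  exists e; split => // p h1 h2.
  by case: (eqVneq p n.+1) => [-> //|hp]; apply: he => //; lia.
exists (a n.+1 / n.+1%:R); split; first by rewrite divr_gt0.
have hl : a n.+1 / n.+1%:R < e by rewrite ltr_pdivrMr.
move=> p h1 h2; case: (eqVneq p n.+1) => [->|hp]; first by rewrite divfK // gt_eqF.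
apply: le_trans (he p h1 _); last by lia.
by rewrite ler_wpM2r // ?ler0n // ltW.
Qed.

Definition zono_repr_strict n x (L U : R) := exists (c : nat -> nat -> R) (c1 : nat -> R),
  (forall i j, (j < i)%N -> (i < n)%N -> 0 <= c i j <= 3/2) /\
  (forall i, (i < n)%N -> L < c1 i <= U) /\
  forall k, (k < n)%N -> x k = c1 k + \sum_(0 <= j < k) c k j - \sum_(k.+1 <= i < n) c i k.

(* Strict lower Hall inequalities for [p > 0] give the strict variant: they
   still hold with [L] replaced by some [L + e], [e > 0]. *)
Corollary hall_zono_repr_strict n x L U : nondecr n x ->
  (forall p, (0 < p)%N -> (p <= n)%N -> p%:R * L - slack n p < \sum_(0 <= i < p) x i) ->
  upper_hall n x U -> zono_repr_strict n x L U.
Proof.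
move=> hm hB hT.
have [e [e0 he]] := @linear_lower_bound n
  (fun p => \sum_(0 <= i < p) x i - (p%:R * L - slack n p))
  (fun p h1 h2 => ltac:(have := hB p h1 h2; lra)).
have hB' : lower_hall n x (L + e).
  move=> p hp; case: (posnP p) => [->|hp0]; first by rewrite big_geq // /slack; lra.
  by have := he p hp0 hp; lra.
have [c [c1 [hc [hc1 heq]]]] := hall_zono_repr hm hB' hT.
by exists c, c1; split => //; split => // i hi; have := hc1 i hi; lra.
Qed.

End HallCondition.
Arguments slack {R} n p.

Section Pairing.
Variables (R : realFieldType) (d : nat).

(* Pairing of a character with a weight vector [w] on the coordinates; all
   estimates below are obtained by pairing with indicators of intervals. *)
Definition pairing (w : 'I_d -> R) (v : 'rV[R]_d) : R := \sum_(k < d) w k * v 0 k.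

Lemma pairingD w u v : pairing w (u + v) = pairing w u + pairing w v.
Proof. by rewrite /pairing -big_split; apply: eq_bigr => k _; rewrite mxE mulrDr. Qed.

Lemma pairingN w v : pairing w (- v) = - pairing w v.
Proof. by rewrite /pairing -sumrN; apply: eq_bigr => k _; rewrite mxE mulrN. Qed.

Lemma pairingZ w a v : pairing w (a *: v) = a * pairing w v.
Proof. by rewrite /pairing mulr_sumr; apply: eq_bigr => k _; rewrite mxE mulrCA. Qed.

Lemma pairing_sum w (I : finType) (P : pred I) (F : I -> 'rV[R]_d) :
  pairing w (\sum_(i | P i) F i) = \sum_(i | P i) pairing w (F i).
Proof.
rewrite /pairing exchange_big /=; apply: eq_bigr => k _.
by rewrite summxE mulr_sumr.
Qed.

Lemma pairing_beta w i : pairing w (beta R i) = w i.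
Proof.
rewrite /pairing (bigD1 i) //= big1 ?addr0; first by rewrite /beta mxE !eqxx mulr1.
by move=> k hk; rewrite /beta mxE eqxx /= (negbTE hk) mulr0.
Qed.

Definition ind (b : bool) : R := if b then 1 else 0.

Lemma pairing_ind1 (v : 'rV[R]_d) k : pairing (fun i => ind (i == k)) v = v 0 k.
Proof.
rewrite /pairing (bigD1 k) //= big1 ?addr0; first by rewrite /ind eqxx mul1r.
by move=> i hi; rewrite /ind (negbTE hi) mul0r.
Qed.

Lemma pairing_roots w (P : pred 'I_d) (Q : 'I_d -> pred 'I_d) (c : 'I_d -> 'I_d -> R) :
  pairing w (\sum_(i | P i) \sum_(j | Q i j) c i j *: (beta R i - beta R j)) =
  \sum_i \sum_j (if P i && Q i j then c i j * (w i - w j) else 0).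
Proof.
rewrite pairing_sum big_mkcond; apply: eq_bigr => i _.
case: (P i) => /=; last by rewrite big1.
rewrite pairing_sum big_mkcond; apply: eq_bigr => j _.
by case: (Q i j) => //; rewrite pairingZ pairingD pairingN !pairing_beta.
Qed.

Lemma pairing_weights w (P : pred 'I_d) (c : 'I_d -> R) :
  pairing w (\sum_(i | P i) c i *: beta R i) = \sum_(i | P i) c i * w i.
Proof. by rewrite pairing_sum; apply: eq_bigr => i _; rewrite pairingZ pairing_beta. Qed.

Lemma dsum_ind_l (G : 'I_d -> 'I_d -> R) k :
  \sum_i \sum_j G i j * ind (i == k) = \sum_j G k j.
Proof.
rewrite (bigD1 k) //=.
have -> : \sum_(i | i != k) \sum_j G i j * ind (i == k) = 0.
  by apply: big1 => i hi; apply: big1 => j _; rewrite /ind (negbTE hi) mulr0.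
by rewrite addr0; apply: eq_bigr => j _; rewrite /ind eqxx mulr1.
Qed.

Lemma dsum_ind_r (G : 'I_d -> 'I_d -> R) k :
  \sum_i \sum_j G i j * ind (j == k) = \sum_i G i k.
Proof.
apply: eq_bigr => i _; rewrite (bigD1 k) //=.
have -> : \sum_(j | j != k) G i j * ind (j == k) = 0.
  by apply: big1 => j hj; rewrite /ind (negbTE hj) mulr0.
by rewrite addr0 /ind eqxx mulr1.
Qed.

Lemma ord_interval_if (F : nat -> R) (lo hi : nat) : (hi <= d)%N ->
  \sum_(i < d) (if ((lo <= i) && (i < hi))%N then F i else 0) = \sum_(lo <= i < hi) F i.
Proof.
move=> h; rewrite -big_mkcond; case: (leqP lo hi) => hlh; last first.
  by rewrite big_geq ?big1 // => [i /andP [h1 h2]|]; lia.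
rewrite (big_nat_widenl _ _ _ _ _ (leq0n lo)) (big_nat_widen _ _ _ _ _ h) big_mkord.
by apply: eq_bigl => i /=.
Qed.

Lemma sum_ind_interval (lo hi : nat) : (lo <= hi)%N -> (hi <= d)%N ->
  \sum_(i < d) ind (((lo <= i) && (i < hi))%N) = hi%:R - lo%:R.
Proof.
move=> h1 h2; rewrite (eq_bigr (fun i : 'I_d => if ((lo <= i) && (i < hi))%N then 1 else 0)) //.
by rewrite (ord_interval_if (fun _ => 1)) // sumr_const_nat -mulr_natr mul1r natrB.
Qed.

Lemma dsum_prod (A B : 'I_d -> bool) (k : R) :
  \sum_i \sum_j k * ind (A i) * ind (B j) = k * (\sum_i ind (A i)) * (\sum_j ind (B j)).
Proof.
rewrite (eq_bigr (fun i => (k * ind (A i)) * \sum_j ind (B j))) => [|i _]; last by rewrite mulr_sumr.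
by rewrite -mulr_suml -mulr_sumr.
Qed.

End Pairing.
Arguments ind {R} b.

Section VaBounds.
Variables (R : realFieldType) (a d : nat) (chi : 'rV[R]_d).

Definition coords (k : nat) : R := \sum_(i < d | (i : nat) == k) chi 0 i.

Lemma coordsE (i : 'I_d) : coords i = chi 0 i.
Proof. by rewrite /coords (big_pred1 i) // => j /=. Qed.

Lemma coords_nondecr : strictly_dominant chi -> nondecr d coords.
Proof.
move=> hsd i j hij hj; have hi : (i < d)%N by lia.
rewrite -[i]/(nat_of_ord (Ordinal hi)) -[j]/(nat_of_ord (Ordinal hj)) !coordsE.
case: (eqVneq i j) => [eij|nij]; first by have -> : Ordinal hi = Ordinal hj by apply: val_inj.
by apply: ltW; apply: hsd => /=; lia.
Qed.

Lemma pairing_interval (lo hi : nat) : (hi <= d)%N ->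
  pairing (fun k : 'I_d => ind (((lo <= k) && (k < hi))%N)) chi = \sum_(lo <= k < hi) coords k.
Proof.
move=> h; rewrite /pairing -(ord_interval_if coords lo h); apply: eq_bigr => k _.
by rewrite /ind coordsE; case: ifP => _; rewrite ?mul1r ?mul0r.
Qed.

Definition half_a : R := a%:R / 2.

Lemma half_a_ge0 : 0 <= half_a.
Proof. by rewrite /half_a divr_ge0 // ler0n. Qed.

Lemma in_Va1_pairing : in_Va1 a chi -> exists (t : 'I_d -> 'I_d -> R) (s u : 'I_d -> R),
  (forall i j, 0 <= t i j <= 1) /\ (forall k, -1 <= s k <= 1) /\ (forall k, 0 <= u k <= 1) /\
  forall w, pairing w chi =
    \sum_i \sum_j (3/2 * t i j) * (w i - w j) + \sum_k (half_a * s k - u k) * w k.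
Proof.
move=> [t [s [u [ht [hs [hu ->]]]]]]; exists t, s, u; split => //; split => //; split => // w.
rewrite !pairingD pairing_roots pairing_weights pairing_sum -addrA; congr (_ + _).
rewrite -big_split; apply: eq_bigr => k _ /=.
by rewrite pairingZ pairingN pairing_beta /half_a; ring.
Qed.

Lemma Va1_upper_hall : in_Va1 a chi -> upper_hall d coords half_a.
Proof.
move=> hv p hp; have [t [s [u [ht [hs [hu hpair]]]]]] := in_Va1_pairing hv.
rewrite -(pairing_interval p (leqnn d)) hpair.
have h1 : \sum_i \sum_j (3/2 * t i j) *
     (ind (((p <= i) && (i < d))%N) - ind (((p <= j) && (j < d))%N))
   <= \sum_(i < d) \sum_(j < d) 3/2 * ind (((p <= i) && (i < d))%N) * ind (((0 <= j) && (j < p))%N).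
  apply: ler_sum => i _; apply: ler_sum => j _; have := ht i j.
  by have := ltn_ord i; have := ltn_ord j; rewrite /ind;
    case: ifPn => h1; case: ifPn => h2; case: ifPn => h3 //; lra || lia.
rewrite dsum_prod !sum_ind_interval // in h1.
have h2 : \sum_k (half_a * s k - u k) * ind (((p <= k) && (k < d))%N) <=
          \sum_(k < d) half_a * ind (((p <= k) && (k < d))%N).
  apply: ler_sum => k _; have := hs k; have := hu k; have := half_a_ge0.
  by rewrite /ind; case: ifP => _; nra.
by rewrite -mulr_sumr sum_ind_interval // in h2; rewrite /slack; lra.
Qed.

Lemma Va1_lower_hall : in_Va1 a chi -> lower_hall d coords (- (half_a + 1)).
Proof.
move=> hv p hp; have [t [s [u [ht [hs [hu hpair]]]]]] := in_Va1_pairing hv.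
rewrite -(pairing_interval 0 hp) hpair.
have h1 : \sum_(i < d) \sum_(j < d) (- (3/2)) * ind (((p <= i) && (i < d))%N) *
     ind (((0 <= j) && (j < p))%N)
   <= \sum_i \sum_j (3/2 * t i j) *
     (ind (((0 <= i) && (i < p))%N) - ind (((0 <= j) && (j < p))%N)).
  apply: ler_sum => i _; apply: ler_sum => j _; have := ht i j.
  by have := ltn_ord i; have := ltn_ord j; rewrite /ind;
    case: ifPn => h1; case: ifPn => h2; case: ifPn => h3 //; lra || lia.
rewrite dsum_prod !sum_ind_interval // in h1.
have h2 : \sum_(k < d) (- (half_a + 1)) * ind (((0 <= k) && (k < p))%N) <=
          \sum_k (half_a * s k - u k) * ind (((0 <= k) && (k < p))%N).
  apply: ler_sum => k _; have := hs k; have := hu k; have := half_a_ge0.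
  by rewrite /ind; case: ifP => _; nra.
by rewrite -mulr_sumr sum_ind_interval // in h2; rewrite /slack; lra.
Qed.

End VaBounds.

Section DecompVector.
Variables (R : realFieldType) (d : nat).

Definition decomp_vec (e : nat) (c : 'I_d -> 'I_d -> R) (c1 : 'I_d -> R) : 'rV[R]_d :=
  \sum_(i < d | (i < e)%N) \sum_(j < d | (j < i)%N) c i j *: (beta R i - beta R j)
  + \sum_(i < d | (e <= i)%N) \sum_(j < d | (e <= j)%N && (j < i)%N) c i j *: (beta R i - beta R j)
  + \sum_(i < d | (e <= i)%N) \sum_(j < d | (j < e)%N) (3 / 2) *: (beta R i - beta R j)
  + \sum_(i < d) c1 i *: beta R i.

Definition root_coef (e : nat) (c : 'I_d -> 'I_d -> R) (i j : 'I_d) : R :=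
  (if (i < e)%N && (j < i)%N then c i j else 0) +
  (if (e <= i)%N && ((e <= j)%N && (j < i)%N) then c i j else 0) +
  (if (e <= i)%N && (j < e)%N then 3/2 else 0).

Lemma decomp_vec_pairing e c c1 w : pairing w (decomp_vec e c c1) =
  \sum_i \sum_j root_coef e c i j * (w i - w j) + \sum_i c1 i * w i.
Proof.
rewrite /decomp_vec !pairingD !pairing_roots pairing_weights; congr (_ + _).
rewrite -!big_split; apply: eq_bigr => i _; rewrite -!big_split; apply: eq_bigr => j _ /=.
by rewrite /root_coef; case: ifP => _; case: ifP => _; case: ifP => _; ring.
Qed.

Lemma decomp_vec_coord e c c1 k :
  decomp_vec e c c1 0 k = \sum_j root_coef e c k j - \sum_i root_coef e c i k + c1 k.
Proof.
rewrite -pairing_ind1 decomp_vec_pairing.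
have -> : forall w : 'I_d -> R, \sum_i \sum_j root_coef e c i j * (w i - w j) =
    \sum_i \sum_j root_coef e c i j * w i - \sum_i \sum_j root_coef e c i j * w j.
  by move=> w; rewrite -sumrB; apply: eq_bigr => i _; rewrite -sumrB;
    apply: eq_bigr => j _; ring.
rewrite dsum_ind_l dsum_ind_r; congr (_ + _).
rewrite (bigD1 k) //= big1 ?addr0; first by rewrite /ind eqxx mulr1.
by move=> i hi; rewrite /ind (negbTE hi) mulr0.
Qed.

End DecompVector.

Lemma shift_sum (R : realFieldType) (F : nat -> R) (e lo hi : nat) :
  \sum_(lo <= i < hi) F (e + i)%N = \sum_(e + lo <= i < e + hi) F i.
Proof.
rewrite (addnC e lo) (big_addn lo (e + hi) e xpredT F) addKn.
by apply: eq_bigr => i _; rewrite addnC.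
Qed.

Lemma sum_addc (R : realFieldType) (F : nat -> R) (c : R) (lo hi : nat) : (lo <= hi)%N ->
  \sum_(lo <= i < hi) (F i + c) = \sum_(lo <= i < hi) F i + (hi%:R - lo%:R) * c.
Proof. by move=> h; rewrite big_split /= sum_const_nat_R. Qed.

Ltac split_ifs := repeat (case: ifPn => ?); (try by lia); try ring; try lra.

Section Glue.
Variables (R : realFieldType) (d e : nat) (chi : 'rV[R]_d).
Variables (c1f c2f : nat -> nat -> R) (c1b c2b : nat -> R).
Hypothesis e_le_d : (e <= d)%N.
Hypothesis low_eq : forall k, (k < e)%N -> coords chi k + 3/2 * (d%:R - e%:R) =
  c1b k + \sum_(0 <= j < k) c1f k j - \sum_(k.+1 <= i < e) c1f i k.
Hypothesis high_eq : forall k, (k < d - e)%N -> coords chi (e + k) - 3/2 * e%:R =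
  c2b k + \sum_(0 <= j < k) c2f k j - \sum_(k.+1 <= i < d - e) c2f i k.

(* Glued coefficients and weights; roots across the blocks carry 3/2 in
   [decomp_vec], so [glued_coef] is irrelevant there. *)
Definition glued_coef (i j : 'I_d) : R :=
  if (i < e)%N then c1f i j else if (e <= j)%N then c2f (i - e)%N (j - e)%N else 0.
Definition glued_weight (i : 'I_d) : R := if (i < e)%N then c1b i else c2b (i - e)%N.

Lemma glued_coord_low (k : 'I_d) : (k < e)%N ->
  decomp_vec e glued_coef glued_weight 0 k = chi 0 k.
Proof.
move=> hke; have hk := ltn_ord k; rewrite decomp_vec_coord -coordsE.
have S1 : \sum_j root_coef e glued_coef k j = \sum_(0 <= j < k) c1f k j.
  rewrite -(@ord_interval_if R d (c1f k) 0 k) ?(ltnW hk) //.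
  by apply: eq_bigr => j _; rewrite /root_coef /glued_coef; have ? := ltn_ord j; split_ifs.
have S2 : \sum_i root_coef e glued_coef i k =
    \sum_(k.+1 <= i < e) c1f i k + \sum_(e <= i < d) 3/2.
  rewrite -(@ord_interval_if R d (fun i => c1f i k) k.+1 e) //.
  rewrite -(@ord_interval_if R d (fun _ => 3/2) e d) // -big_split /=.
  by apply: eq_bigr => i _; rewrite /root_coef /glued_coef; have ? := ltn_ord i; split_ifs.
rewrite S1 S2 /glued_weight hke sum_const_nat_R //.
by have := low_eq hke; lra.
Qed.

Lemma glued_coord_high (k : 'I_d) : (e <= k)%N ->
  decomp_vec e glued_coef glued_weight 0 k = chi 0 k.
Proof.
move=> hke; have hk := ltn_ord k; rewrite decomp_vec_coord -coordsE.
have hk' : (k - e < d - e)%N by lia.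
have S1 : \sum_j root_coef e glued_coef k j =
    \sum_(0 <= j < k - e) c2f (k - e)%N j + \sum_(0 <= j < e) 3/2.
  have -> : \sum_(0 <= j < k - e) c2f (k - e)%N j = \sum_(e <= j < k) c2f (k - e)%N (j - e)%N.
    have := shift_sum (fun j => c2f (k - e)%N (j - e)%N) e 0 (k - e).
    by rewrite addn0 subnKC // => <-; apply: eq_bigr => j _; rewrite addKn.
  rewrite -(@ord_interval_if R d (fun j => c2f (k - e)%N (j - e)%N) e k) ?(ltnW hk) //.
  rewrite -(@ord_interval_if R d (fun _ => 3/2) 0 e) // -big_split /=.
  by apply: eq_bigr => j _; rewrite /root_coef /glued_coef; have ? := ltn_ord j; split_ifs.
have S2 : \sum_i root_coef e glued_coef i k = \sum_((k - e).+1 <= i < d - e) c2f i (k - e)%N.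
  have -> : \sum_((k - e).+1 <= i < d - e) c2f i (k - e)%N =
            \sum_(k.+1 <= i < d) c2f (i - e)%N (k - e)%N.
    have := shift_sum (fun i => c2f (i - e)%N (k - e)%N) e (k - e).+1 (d - e).
    by rewrite addnS !subnKC // => <-; apply: eq_bigr => j _; rewrite addKn.
  rewrite -(@ord_interval_if R d (fun i => c2f (i - e)%N (k - e)%N) k.+1 d) //.
  by apply: eq_bigr => i _; rewrite /root_coef /glued_coef; have ? := ltn_ord i; split_ifs.
rewrite S1 S2 /glued_weight ltnNge hke /= sum_const_nat_R //.
by have := high_eq hk'; rewrite subnKC //; lra.
Qed.

Lemma glued_decomp : chi = decomp_vec e glued_coef glued_weight.
Proof.
apply/rowP => k; case: (ltnP k e) => hke.
  by rewrite glued_coord_low.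
by rewrite glued_coord_high.
Qed.

End Glue.

Section Potential.
Variables (R : realFieldType) (a d : nat) (chi : 'rV[R]_d).

(* The potential Phi(k) = <chi, sigma_k> + k a/2 + 3/2 k (d - k).  The integer
   [e] of the theorem is the last minimiser of Phi on [0, d]. *)
Definition potential (k : nat) : R :=
  \sum_(0 <= i < k) coords chi i + k%:R * half_a R a + 3/2 * k%:R * (d%:R - k%:R).

(* Minimality against smaller [k] gives the upper Hall condition on the
   block [0, e) (shifted by 3/2 (d - e)), whose lower one comes from V^a(1,d). *)
Lemma low_block_repr e : strictly_dominant chi -> in_Va1 a chi -> (e <= d)%N ->
  (forall k, (k <= e)%N -> potential e <= potential k) ->
  zono_repr e (fun i => coords chi i + 3/2 * (d%:R - e%:R)) (- (half_a R a + 1)) (- half_a R a).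
Proof.
move=> hsd hv hed hmin; apply: hall_zono_repr.
- by move=> i j hij hj; have := coords_nondecr hsd hij (leq_trans hj hed); lra.
- move=> p hp; rewrite sum_addc // subr0.
  by have := Va1_lower_hall hv (leq_trans hp hed); rewrite /slack; lra.
- move=> p hp; rewrite sum_addc // sum_nat_tail //.
  by have := hmin p hp; rewrite /potential /slack; lra.
Qed.

(* Strict minimality against larger [k] gives the strict lower Hall condition
   on the block [e, d) (shifted by -3/2 e), whose upper one comes from V^a(1,d). *)
Lemma high_block_repr e : strictly_dominant chi -> in_Va1 a chi -> (e <= d)%N ->
  (forall k, (e < k)%N -> (k <= d)%N -> potential e < potential k) ->
  zono_repr_strict (d - e) (fun i => coords chi (e + i) - 3/2 * e%:R) (- half_a R a) (half_a R a).
Proof.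
move=> hsd hv hed hmin; apply: hall_zono_repr_strict.
- by move=> i j hij hj; have := @coords_nondecr R d chi hsd (e + i) (e + j) ltac:(lia) ltac:(lia); lra.
- move=> p hp0 hp; rewrite (sum_addc (fun i => coords chi (e + i))) // subr0 shift_sum addn0.
  rewrite (@sum_nat_tail _ (coords chi) e (e + p)); last by lia.
  have := hmin (e + p)%N ltac:(lia) ltac:(lia).
  by rewrite /potential /slack natrD natrB //; lra.
- move=> p hp; rewrite (sum_addc (fun i => coords chi (e + i))) // shift_sum.
  have -> : (e + (d - e) = d)%N by lia.
  have := Va1_upper_hall hv (p := (e + p)%N) ltac:(lia).
  by rewrite /slack natrD natrB //; lra.
Qed.

Lemma decomp_of_last_minimiser e : strictly_dominant chi -> in_Va1 a chi -> (e <= d)%N ->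
  (forall k, (k <= d)%N -> potential e <= potential k) ->
  (forall k, (e < k)%N -> (k <= d)%N -> potential e < potential k) ->
  decomp a chi e.
Proof.
move=> hsd hv hed hmin1 hmin2.
have [c1f [c1b [hc1 [hcb1 heq1]]]] :=
  low_block_repr hsd hv hed (fun k hk => hmin1 k (leq_trans hk hed)).
have [c2f [c2b [hc2 [hcb2 heq2]]]] := high_block_repr hsd hv hed hmin2.
exists (glued_coef e c1f c2f), (glued_weight e c1b c2b); split; last split; last split.
- move=> i j hji; rewrite /glued_coef; have hid := ltn_ord i; case: ifPn => h1.
    by apply: hc1 => //; lia.
  by case: ifPn => h2; [apply: hc2; lia | lra].
- by move=> i hi; rewrite /glued_weight hi; have := hcb1 i hi; rewrite /half_a; lra.
- move=> i hi; rewrite /glued_weight ltnNge hi /=; have hid := ltn_ord i.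
  by have := hcb2 (i - e)%N ltac:(lia); rewrite /half_a; lra.
exact: (glued_decomp hed heq1 heq2).
Qed.

Lemma decomp_potential_le e k : decomp a chi e -> (k < e)%N -> (e <= d)%N ->
  potential e <= potential k.
Proof.
move=> [c [c1 [hc [hc1 [hc2 heq]]]]] hke hed.
change (chi = decomp_vec e c c1) in heq.
have hpair := pairing_interval chi k hed; rewrite {1}heq decomp_vec_pairing in hpair.
have h1 : \sum_(i < d) \sum_(j < d) root_coef e c i j *
     (ind (((k <= i) && (i < e))%N) - ind (((k <= j) && (j < e))%N)) <=
   \sum_(i < d) \sum_(j < d) 3/2 * ind (((k <= i) && (i < e))%N) * ind (((0 <= j) && (j < k))%N) +
   \sum_(i < d) \sum_(j < d) (- (3/2)) * ind (((e <= i) && (i < d))%N) *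
     ind (((k <= j) && (j < e))%N).
  rewrite -big_split; apply: ler_sum => i _; rewrite -big_split; apply: ler_sum => j _ /=.
  have ? := ltn_ord i; have ? := ltn_ord j.
  by rewrite /root_coef /ind; case: (ltnP j i) => hji; [have := hc i j hji | ]; split_ifs.
rewrite !dsum_prod !sum_ind_interval // in h1; try lia.
have h2 : \sum_(i < d) c1 i * ind (((k <= i) && (i < e))%N) <=
          \sum_(i < d) (- half_a R a) * ind (((k <= i) && (i < e))%N).
  apply: ler_sum => i _; rewrite /ind; case: ifPn => h; last lra.
  by have := hc1 i ltac:(lia); rewrite /half_a; lra.
rewrite -mulr_sumr sum_ind_interval // in h2; try lia.
by move: hpair; rewrite sum_nat_tail; [rewrite /potential; lra | lia].
Qed.

Lemma decomp_potential_lt e k : decomp a chi e -> (e < k)%N -> (k <= d)%N ->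
  potential e < potential k.
Proof.
move=> [c [c1 [hc [hc1 [hc2 heq]]]]] hek hkd.
change (chi = decomp_vec e c c1) in heq.
have hpair := pairing_interval chi e hkd; rewrite {1}heq decomp_vec_pairing in hpair.
have h1 :
   \sum_(i < d) \sum_(j < d) (- (3/2)) * ind (((k <= i) && (i < d))%N) *
     ind (((e <= j) && (j < k))%N) +
   \sum_(i < d) \sum_(j < d) 3/2 * ind (((e <= i) && (i < k))%N) * ind (((0 <= j) && (j < e))%N)
   <= \sum_(i < d) \sum_(j < d) root_coef e c i j *
     (ind (((e <= i) && (i < k))%N) - ind (((e <= j) && (j < k))%N)).
  rewrite -big_split; apply: ler_sum => i _; rewrite -big_split; apply: ler_sum => j _ /=.
  have ? := ltn_ord i; have ? := ltn_ord j.
  by rewrite /root_coef /ind; case: (ltnP j i) => hji; [have := hc i j hji | ]; split_ifs.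
rewrite !dsum_prod !sum_ind_interval // in h1; try lia.
have hed : (e < d)%N by lia.
have h2 : \sum_(i < d) (- half_a R a) * ind (((e <= i) && (i < k))%N) <
          \sum_(i < d) c1 i * ind (((e <= i) && (i < k))%N).
  rewrite -subr_gt0 -sumrB (bigD1 (Ordinal hed)) //=.
  have p1 : 0 < c1 (Ordinal hed) * ind (((e <= e) && (e < k))%N) -
                 - half_a R a * ind (((e <= e) && (e < k))%N).
    by rewrite /ind leqnn hek /=; have := hc2 (Ordinal hed) (leqnn e); rewrite /half_a; lra.
  have p2 : 0 <= \sum_(i < d | i != Ordinal hed) (c1 i * ind (((e <= i) && (i < k))%N) -
                 - half_a R a * ind (((e <= i) && (i < k))%N)).
    apply: sumr_ge0 => i _; rewrite /ind; case: ifPn => h; last lra.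
    by have := hc2 i ltac:(lia); rewrite /half_a; lra.
  lra.
rewrite -mulr_sumr sum_ind_interval // in h2; try lia.
by move: hpair; rewrite sum_nat_tail; [rewrite /potential; lra | lia].
Qed.

End Potential.

Lemma last_argmin (R : realFieldType) (f : nat -> R) n :
  exists e, (e <= n)%N /\ (forall k, (k <= n)%N -> f e <= f k) /\
    (forall k, (e < k)%N -> (k <= n)%N -> f e < f k).
Proof.
elim: n => [|n [e [he [h1 h2]]]].
  by exists 0%N; split => //; split => [k|k hk1 hk2]; [rewrite leqn0 => /eqP -> | lia].
case: (lerP (f n.+1) (f e)) => h.
  exists n.+1; split => //; split => [k hk|k hk1 hk2]; last lia.
  case: (eqVneq k n.+1) => [-> //|hkn].
  by apply: le_trans h (h1 k _); lia.
exists e; split; first lia; split => [k hk|k hk1 hk2].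
  by case: (eqVneq k n.+1) => [->|hkn]; [apply: ltW | apply: h1; lia].
by case: (eqVneq k n.+1) => [-> //|hkn]; apply: h2; lia.
Qed.

Unset Implicit Arguments.
Theorem proposition3p4 (R : realFieldType) (a d : nat) (chi : 'rV[R]_d) :
  strictly_dominant chi -> in_Va1 a chi ->
  exists! e : nat, (e <= d)%N /\ decomp a chi e.
Proof.
move=> hsd hv.
have [e [hed [hmin hlast]]] := last_argmin (potential a chi) d.
exists e; split; first by split => //; apply: decomp_of_last_minimiser.
move=> e' [he'd hdec]; case: (ltngtP e e') => hlt //.
  by exfalso; have := hlast e' hlt he'd; have := decomp_potential_le hdec hlt he'd; lra.
by exfalso; have := hmin e' he'd; have := decomp_potential_lt hdec hlt hed; lra.
Qed.
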